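(* Let $n,d\ge1$. Let $W=(w_{i,j})$, $\widetilde W=(\tilde w_{i,j})$ be real $n\times n$ matrices and $G,\widetilde G$ real $nd\times nd$ block matrices with $d\times d$ blocks $G_{i,j},\widetilde G_{i,j}$. Suppose there exist $f_1,\dots,f_n>0$ and $\varepsilon,\eta\ge0$ with $$\sup_{i,j}\Big|\frac{\tilde w_{i,j}}{f_i}-w_{i,j}\Big|\le\varepsilon,\qquad \sup_{i,j}\|\widetilde G_{i,j}-G_{i,j}\|_F\le\eta,$$ and that there is $C>0$ with $0\le w_{i,j}\le C$ for all $i,j$, $\sup_{i,j}\|G_{i,j}\|_F\le C$ and $\sup_{i,j}\|\widetilde G_{i,j}\|_F\le C$. If $\inf_i\frac1n\sum_{j\ne i}w_{i,j}>\gamma$ and $\gamma>\varepsilon$, then $$\|L(W,G)-L(\widetilde W,\widetilde G)\|_{op}\le \frac1\gamma C(\eta+\varepsilon)+\frac{\varepsilon}{\gamma(\gamma-\varepsilon)}C^2.$$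
   Context: For an $n\times n$ matrix $W=(w_{i,j})$ and an $nd\times nd$ block matrix $G$ with $d\times d$ blocks $G_{i,j}$, define $S$ as the block matrix with blocks $S_{i,j}=w_{i,j}G_{i,j}$ and $D$ as the block-diagonal matrix with diagonal blocks $D_{i,i}=\big(\sum_{j\ne i}w_{i,j}\big)\mathrm I_d$ (assumed invertible); $L(W,G):=D^{-1}S$. $\|\cdot\|_{op}$ is the largest singular value, $\|\cdot\|_F$ the Frobenius norm. *)

From HB Require Import structures.
From mathcomp Require Import all_boot all_order all_algebra.
From mathcomp Require Import all_classical all_reals.
Set Implicit Arguments. Unset Strict Implicit. Unset Printing Implicit Defensive.
Import Order.TTheory GRing.Theory Num.Theory.
Local Open Scope ring_scope.

Definition norm2 {R : realType} {m : nat} (v : 'cV[R]_m) : R :=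
  Num.sqrt (\sum_(i < m) v i 0 ^+ 2).

Definition frob {R : realType} {p q : nat} (A : 'M[R]_(p, q)) : R :=
  Num.sqrt (\sum_(i < p) \sum_(j < q) A i j ^+ 2).

Definition opnorm {R : realType} {m : nat} (A : 'M[R]_m) : R :=
  sup [set norm2 (A *m v) | v in [set v : 'cV[R]_m | norm2 v <= 1]]%classic.

(* block matrix built from n x n blocks of size d x d:
   its size is \sum_(i < n) d = n * d *)
Definition blk {R : realType} (n d : nat) (B : 'I_n -> 'I_n -> 'M[R]_d)
  : 'M[R]_(\sum_(i < n) d) :=
  @mxblock R n n (fun _ => d) (fun _ => d) B.

Definition Smat {R : realType} (n d : nat) (W : 'M[R]_n)
  (G : 'I_n -> 'I_n -> 'M[R]_d) : 'M[R]_(\sum_(i < n) d) :=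
  blk (fun i j => W i j *: G i j).

Definition Dmat {R : realType} (n d : nat) (W : 'M[R]_n)
  : 'M[R]_(\sum_(i < n) d) :=
  blk (fun i j => if i == j then (\sum_(k < n | k != i) W i k)%:M else 0).

Definition Lmat {R : realType} (n d : nat) (W : 'M[R]_n)
  (G : 'I_n -> 'I_n -> 'M[R]_d) : 'M[R]_(\sum_(i < n) d) :=
  invmx (Dmat d W) *m Smat W G.

From HB Require Import structures.
From mathcomp Require Import all_boot all_order all_algebra.
From mathcomp Require Import all_classical all_reals.
From mathcomp Require Import ring lra.
Set Implicit Arguments. Unset Strict Implicit. Unset Printing Implicit Defensive.
Import Order.TTheory GRing.Theory Num.Theory.
Local Open Scope ring_scope.

(** The blocks of L(W,G) are (w_ij / D_i) G_ij, with D_i = sum_{j <> i} w_ij, and L is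
   unchanged when the rows of W are rescaled; so W~ may be replaced by W' = (w~_ij / f_i),
   which is entrywise eps-close to W.  Bounding the operator norm by the Frobenius norm
   and comparing blocks as x G - y G~ = x (G - G~) + (x - y) G~, Minkowski's inequality
   gives |L(W,G) - L(W',G~)|_F <= eta |X|_F + C |Y - X|_F, where X and Y hold the
   normalized weights w_ij / D_i and w'_ij / D'_i.  Each row of X has squared norm at most
   C^2 / (n gamma^2).  For a row of Y - X write y_j - x_j = (d_j D - w_j S) / (D D') with
   d = w' - w and S = sum_{j <> i} d_j; off the diagonal, the centered Cauchy-Schwarz
   inequality bounds sum_j (d_j D - w_j S)^2 by (n - 1) |w|^2 |d|^2.  This, rather than
   the triangle inequality, is what yields the constant
   (gamma - eps + C) / (gamma (gamma - eps)). *)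

Section FiniteSums.
Variable R : realFieldType.

Lemma cauchy_schwarz (I : finType) (P : pred I) (a b : I -> R) :
  (\sum_(i | P i) a i * b i) ^+ 2 <=
  (\sum_(i | P i) a i ^+ 2) * (\sum_(i | P i) b i ^+ 2).
Proof.
have lagrange : \sum_(i | P i) \sum_(j | P j) (a i * b j - a j * b i) ^+ 2 =
    2 * ((\sum_(i | P i) a i ^+ 2) * (\sum_(i | P i) b i ^+ 2)
         - (\sum_(i | P i) a i * b i) ^+ 2).
  have sqr_expand i j : (a i * b j - a j * b i) ^+ 2 =
      a i ^+ 2 * b j ^+ 2 + b i ^+ 2 * a j ^+ 2 - 2 * (a i * b i) * (a j * b j).
    by ring.
  under eq_bigr => i _ do under eq_bigr => j _ do rewrite sqr_expand.
  under eq_bigr => i _ do rewrite sumrB big_split /= -!mulr_sumr.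
  by rewrite sumrB big_split /= -!mulr_suml -mulr_sumr; ring.
have : 0 <= \sum_(i | P i) \sum_(j | P j) (a i * b j - a j * b i) ^+ 2.
  by do 2![apply: sumr_ge0 => ? _]; apply: sqr_ge0.
by rewrite lagrange; lra.
Qed.

Lemma sum_pair_subr_mul (I : finType) (P : pred I) (a b : I -> R) :
  \sum_(j | P j) \sum_(k | P k) (a j - a k) * (b j - b k) =
  2 * (#|P|%:R * \sum_(j | P j) a j * b j - (\sum_(j | P j) a j) * \sum_(j | P j) b j).
Proof.
have expand j k : (a j - a k) * (b j - b k) = a j * b j - a j * b k - a k * b j + a k * b k.
  by ring.
under eq_bigr => j _ do under eq_bigr => k _ do rewrite expand.
under eq_bigr => j _ do rewrite !big_split !sumrN /= -!mulr_sumr -!mulr_suml sumr_const.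
rewrite !big_split !sumrN /= -!mulr_suml -!mulr_sumr sumr_const.
under eq_bigr do rewrite mulrnAr.
by rewrite sumrMnl -(mulr_natl (\sum_(i | P i) a i * b i)); ring.
Qed.

Lemma centered_cauchy_schwarz (I : finType) (P : pred I) (a b : I -> R) :
  (#|P|%:R * \sum_(j | P j) a j * b j - (\sum_(j | P j) a j) * \sum_(j | P j) b j) ^+ 2 <=
  (#|P|%:R * \sum_(j | P j) a j ^+ 2 - (\sum_(j | P j) a j) ^+ 2) *
  (#|P|%:R * \sum_(j | P j) b j ^+ 2 - (\sum_(j | P j) b j) ^+ 2).
Proof.
have sqr_pair (c : I -> R) : \sum_(j | P j) \sum_(k | P k) (c j - c k) ^+ 2 =
    2 * (#|P|%:R * \sum_(j | P j) c j ^+ 2 - (\sum_(j | P j) c j) ^+ 2).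
  under eq_bigr => j _ do under eq_bigr => k _ do rewrite expr2.
  under [in RHS]eq_bigr => j _ do rewrite expr2.
  by rewrite sum_pair_subr_mul expr2.
have pair_mul (c e : I -> R) := pair_big_dep P (fun=> P) (fun j k => (c j - c k) * (e j - e k)).
have pair_sqr (c : I -> R) := pair_big_dep P (fun=> P) (fun j k => (c j - c k) ^+ 2).
have := cauchy_schwarz (fun jk : I * I => P jk.1 && P jk.2)
  (fun jk => a jk.1 - a jk.2) (fun jk => b jk.1 - b jk.2).
rewrite /= in pair_mul pair_sqr.
rewrite -pair_mul -!pair_sqr sum_pair_subr_mul !sqr_pair.
nra.
Qed.

Lemma sum_sqr_mul_sumB_le (I : finType) (P : pred I) (a b : I -> R) :
  \sum_(j | P j) (b j * \sum_(k | P k) a k - a j * \sum_(k | P k) b k) ^+ 2 <=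
  #|P|%:R * (\sum_(j | P j) a j ^+ 2) * (\sum_(j | P j) b j ^+ 2).
Proof.
have [/card0_eq P0|P_gt0] := posnP #|P|.
  by rewrite big_pred0 ?mulr_ge0 ?sumr_ge0 // => j; rewrite ?sqr_ge0 ?P0.
have := centered_cauchy_schwarz P a b.
set p := \sum_(k | P k) a k; set q := \sum_(k | P k) b k.
set A := \sum_(j | P j) a j ^+ 2; set B := \sum_(j | P j) b j ^+ 2.
set X := \sum_(j | P j) a j * b j; set m := #|P|%:R.
have -> : \sum_(j | P j) (b j * p - a j * q) ^+ 2 = p ^+ 2 * B - 2 * p * q * X + q ^+ 2 * A.
  have expand j : (b j * p - a j * q) ^+ 2 =
      p ^+ 2 * b j ^+ 2 - 2 * p * q * (a j * b j) + q ^+ 2 * a j ^+ 2 by ring.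
  by under eq_bigr do rewrite expand; rewrite big_split sumrB /= -!mulr_sumr.
move=> centered.
have m0 : 0 < m by rewrite ltr0n.
(* Expanded, the centered inequality is exactly m times this one. *)
have : m * (p ^+ 2 * B - 2 * p * q * X + q ^+ 2 * A) <= m * (m * A * B - m * X ^+ 2).
  by lra.
rewrite ler_pM2l // => le_cross.
have : 0 <= m * X ^+ 2 by rewrite mulr_ge0 ?sqr_ge0 ?ltW.
lra.
Qed.

End FiniteSums.

Lemma sqrt_sum_sqrD_le (R : rcfType) (I : finType) (P : pred I) (a b : I -> R) :
  Num.sqrt (\sum_(i | P i) (a i + b i) ^+ 2) <=
  Num.sqrt (\sum_(i | P i) a i ^+ 2) + Num.sqrt (\sum_(i | P i) b i ^+ 2).
Proof.
have -> : \sum_(i | P i) (a i + b i) ^+ 2 =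
    \sum_(i | P i) a i ^+ 2 + 2 * \sum_(i | P i) a i * b i + \sum_(i | P i) b i ^+ 2.
  by rewrite mulr_sumr -!big_split /=; apply: eq_bigr => i _; ring.
set A := \sum_(i | P i) a i ^+ 2; set B := \sum_(i | P i) b i ^+ 2.
have A0 : 0 <= A by rewrite sumr_ge0 // => i _; apply: sqr_ge0.
have B0 : 0 <= B by rewrite sumr_ge0 // => i _; apply: sqr_ge0.
have le_cross : \sum_(i | P i) a i * b i <= Num.sqrt A * Num.sqrt B.
  apply: (le_trans (ler_norm _)).
  by rewrite -sqrtr_sqr -sqrtrM // ler_sqrt ?mulr_ge0 //; apply: cauchy_schwarz.
rewrite -[leRHS]ger0_norm ?addr_ge0 ?sqrtr_ge0 // -sqrtr_sqr ler_sqrt ?sqr_ge0 //.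
by rewrite sqrrD !sqr_sqrtr //; lra.
Qed.

Section Frobenius.
Variable R : realType.

Lemma frob_ge0 p q (A : 'M[R]_(p, q)) : 0 <= frob A.
Proof. exact: sqrtr_ge0. Qed.

Lemma sqr_frob p q (A : 'M[R]_(p, q)) :
  frob A ^+ 2 = \sum_(i < p) \sum_(j < q) A i j ^+ 2.
Proof. by rewrite sqr_sqrtr // sumr_ge0 // => i _; rewrite sumr_ge0 // => j _; apply: sqr_ge0. Qed.

Lemma frob_pairE p q (A : 'M[R]_(p, q)) :
  frob A = Num.sqrt (\sum_(k : 'I_p * 'I_q) A k.1 k.2 ^+ 2).
Proof. by rewrite /frob pair_big. Qed.

Lemma frobD_le p q (A B : 'M[R]_(p, q)) : frob (A + B) <= frob A + frob B.
Proof.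
rewrite !frob_pairE; under eq_bigr do rewrite mxE.
exact: sqrt_sum_sqrD_le.
Qed.

Lemma frobZ p q a (A : 'M[R]_(p, q)) : frob (a *: A) = `|a| * frob A.
Proof.
rewrite /frob -sqrtr_sqr -sqrtrM ?sqr_ge0 // mulr_sumr.
congr Num.sqrt; apply: eq_bigr => i _; rewrite mulr_sumr.
by apply: eq_bigr => j _; rewrite mxE exprMn.
Qed.

Lemma frobN p q (A : 'M[R]_(p, q)) : frob (- A) = frob A.
Proof. by rewrite -scaleN1r frobZ normrN1 mul1r. Qed.

Lemma frob_map_normr p q (A : 'M[R]_(p, q)) : frob (map_mx Num.norm A) = frob A.
Proof.
rewrite /frob; congr Num.sqrt; apply: eq_bigr => i _; apply: eq_bigr => j _.
by rewrite mxE real_normK ?num_real.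
Qed.

Lemma frob_le_rows p q (A : 'M[R]_(p, q)) c : 0 <= c ->
  (forall i, \sum_(j < q) A i j ^+ 2 <= c ^+ 2 / p%:R) -> frob A <= c.
Proof.
move=> c0 rowA; rewrite -(ger0_norm c0) -sqrtr_sqr ler_sqrt ?sqr_ge0 //.
apply: (le_trans (ler_sum _ (fun i _ => rowA i))).
rewrite sumr_const card_ord; case: p {A rowA} => [|p]; first by rewrite sqr_ge0.
by rewrite -(mulr_natr (c ^+ 2 / _)) divfK ?pnatr_eq0.
Qed.

Lemma opnorm_le_frob m (A : 'M[R]_m) : opnorm A <= frob A.
Proof.
rewrite /opnorm; apply: ge_sup.
  exists (norm2 (A *m 0)), 0 => //=.
  by rewrite /norm2 big1 ?sqrtr0 // => i _; rewrite mxE expr0n.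
move=> _ [v v_le1 <-].
have sum_v_le1 : \sum_(i < m) v i 0 ^+ 2 <= 1.
  by move: v_le1; rewrite /= /norm2 -[X in _ <= X]sqrtr1 ler_sqrt.
rewrite /norm2 /frob ler_sqrt; last first.
  by rewrite sumr_ge0 // => i _; rewrite sumr_ge0 // => j _; apply: sqr_ge0.
apply: ler_sum => k _; rewrite mxE.
apply: (le_trans (cauchy_schwarz _ _ _)).
rewrite -[leRHS]mulr1 ler_wpM2l ?sumr_ge0 // => j _; apply: sqr_ge0.
Qed.

Lemma frob_scale_subr_le p q (A B : 'M[R]_(p, q)) x y eta C :
  0 <= x -> frob (B - A) <= eta -> frob B <= C ->
  frob (x *: A - y *: B) <= eta * x + C * `|y - x|.
Proof.
move=> x0 le_BA le_B.
have -> : x *: A - y *: B = - (x *: (B - A) + (y - x) *: B).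
  by apply/matrixP => a b; rewrite !mxE; ring.
rewrite frobN; apply: le_trans (frobD_le _ _) _.
by rewrite !frobZ (ger0_norm x0) [eta * x]mulrC [C * _]mulrC lerD ?ler_wpM2l ?normr_ge0.
Qed.

End Frobenius.

Section Normalization.
Variables (R : realType) (n : nat).

(* [degree W i] is the diagonal entry D_{i,i} of [Dmat]; it omits [W i i], which
   still appears in the block S_{i,i}.  [normalized W] is D^-1 W. *)
Definition degree (W : 'M[R]_n) (i : 'I_n) : R := \sum_(j < n | j != i) W i j.

Definition normalized (W : 'M[R]_n) : 'M[R]_n := \matrix_(i, j) (W i j / degree W i).

Lemma degree_scale_rows (W : 'M[R]_n) (f : 'I_n -> R) i :
  degree (\matrix_(i, j) (f i * W i j)) i = f i * degree W i.
Proof. by rewrite /degree mulr_sumr; apply: eq_bigr => j _; rewrite mxE. Qed.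

Lemma normalized_scale_rows (W : 'M[R]_n) (f : 'I_n -> R) :
  (forall i, f i != 0) -> normalized (\matrix_(i, j) (f i * W i j)) = normalized W.
Proof.
move=> f_neq0; apply/matrixP => i j.
by rewrite !mxE degree_scale_rows invfM mulrACA divff // mul1r.
Qed.

End Normalization.

Section BlockMatrices.
Variables (R : realType) (n d : nat).
Local Notation N := (\sum_(i < n) d)%N.
Local Notation Rank := (@tagnat.Rank n (fun=> d)).

Lemma sum_Rank (F : 'I_N -> R) : \sum_k F k = \sum_(i < n) \sum_(a < d) F (Rank i a).
Proof.
rewrite (@sig_big_dep _ _ _ 'I_n (fun=> 'I_d) xpredT (fun=> xpredT) (fun i a => F (Rank i a))) /=.
rewrite (reindex (@tagnat.rank n (fun=> d))) /=; last first.
  by exists (@tagnat.sig n (fun=> d)) => x _; [apply: tagnat.rankK | apply: tagnat.sigK].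
by apply: eq_bigr => -[i a] _; rewrite tagnat.rankE.
Qed.

Lemma blk_Rank (B : 'I_n -> 'I_n -> 'M[R]_d) i j a b :
  blk B (Rank i a) (Rank j b) = B i j a b.
Proof.
have sig2_Rank i' a' : tagnat.sig2 (Rank i' a') = a' :> 'I_d.
  by apply: val_inj; rewrite tagnat.Rank2K.
by rewrite /blk /mxblock mxE !sig2_Rank 2!tagnat.Rank1K.
Qed.

Lemma sqr_frob_blk (B : 'I_n -> 'I_n -> 'M[R]_d) :
  frob (blk B) ^+ 2 = \sum_(i < n) \sum_(j < n) frob (B i j) ^+ 2.
Proof.
rewrite sqr_frob sum_Rank; apply: eq_bigr => i _.
under eq_bigr do rewrite sum_Rank.
rewrite exchange_big; apply: eq_bigr => j _.
by rewrite sqr_frob; apply: eq_bigr => a _; apply: eq_bigr => b _; rewrite blk_Rank.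
Qed.

Lemma frob_blk_le (B : 'I_n -> 'I_n -> 'M[R]_d) (U : 'M[R]_n) :
  (forall i j, frob (B i j) <= U i j) -> frob (blk B) <= frob U.
Proof.
move=> le_BU; rewrite -ler_sqr ?nnegrE ?frob_ge0 // sqr_frob_blk sqr_frob.
apply: ler_sum => i _; apply: ler_sum => j _.
by rewrite ler_sqr ?nnegrE ?frob_ge0 ?le_BU // (le_trans (frob_ge0 _) (le_BU i j)).
Qed.

Lemma Dmat_mxdiag (W : 'M[R]_n) : Dmat d W = \mxdiag_i (degree W i)%:M.
Proof.
by apply: eq_mxblock => i j; case: eqP => [->|//]; rewrite conform_mx_id.
Qed.

Lemma Lmat_blk (W : 'M[R]_n) (G : 'I_n -> 'I_n -> 'M[R]_d) :
  (forall i, degree W i != 0) -> Lmat W G = blk (fun i j => normalized W i j *: G i j).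
Proof.
move=> deg_neq0.
have D_unit : Dmat d W \in unitmx.
  suff /mulmx1_unit[] : Dmat d W *m \mxdiag_i (degree W i)^-1%:M = 1%:M by [].
  rewrite -(mxdiagZ 1) Dmat_mxdiag [X in _ *m X]/mxdiag mul_mxdiag_mxblock /mxdiag.
  apply: eq_mxblock => i j; case: eqP => [->|_]; last by rewrite mulmx0.
  by rewrite !conform_mx_id -scalar_mxM divff.
rewrite /Lmat (_ : Smat W G = Dmat d W *m blk (fun i j => normalized W i j *: G i j)) ?mulKmx //.
rewrite Dmat_mxdiag /blk mul_mxdiag_mxblock; apply: eq_mxblock => i j.
by rewrite mul_scalar_mx scalerA mxE mulrCA divff // mulr1.
Qed.

Lemma Lmat_scale_rows (W : 'M[R]_n) (f : 'I_n -> R) (G : 'I_n -> 'I_n -> 'M[R]_d) :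
  (forall i, f i != 0) -> (forall i, degree W i != 0) ->
  Lmat (\matrix_(i, j) (f i * W i j)) G = Lmat W G.
Proof.
move=> f_neq0 deg_neq0.
rewrite !Lmat_blk ?normalized_scale_rows // => i.
by rewrite degree_scale_rows mulf_neq0.
Qed.

Lemma frob_Lmat_subr_le (W W' : 'M[R]_n) (G G' : 'I_n -> 'I_n -> 'M[R]_d) eta C :
  (forall i j, 0 <= W i j) -> (forall i, 0 < degree W i) -> (forall i, degree W' i != 0) ->
  (forall i j, frob (G' i j - G i j) <= eta) -> (forall i j, frob (G' i j) <= C) ->
  0 <= eta -> 0 <= C ->
  frob (Lmat W G - Lmat W' G') <=
  eta * frob (normalized W) + C * frob (normalized W' - normalized W).
Proof.
move=> W_ge0 deg_gt0 deg'_neq0 le_G'G le_G' eta0 C0.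
rewrite !Lmat_blk // => [|i]; last by rewrite gt_eqF.
rewrite /blk -mxblockB -/(blk _).
pose U := eta *: normalized W + C *: map_mx Num.norm (normalized W' - normalized W).
apply: le_trans (frob_blk_le (U := U) _) _.
  move=> i j; rewrite !mxE; apply: frob_scale_subr_le => //.
  by rewrite divr_ge0 // ltW.
apply: le_trans (frobD_le _ _) _.
by rewrite !frobZ frob_map_normr !ger0_norm.
Qed.

End BlockMatrices.

Lemma numerator_poly_le (R : realFieldType) (n m C D t : R) :
  0 <= n -> 0 <= m -> 0 <= t -> t <= C -> D <= m * C -> D <= n * C -> t * m <= D ->
  n * t ^+ 2 * (m ^+ 2 * C * D + (D + C * m) ^+ 2) <= (t + C) ^+ 2 * (D + n * m * t) ^+ 2.
Proof.
move=> n0 m0 t0 tC DmC DnC tmD.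
have C0 : 0 <= C := le_trans t0 tC.
have D0 : 0 <= D := le_trans (mulr_ge0 t0 m0) tmD.
have tD_le : t * D <= C * (m * C) := ler_pM t0 D0 tC DmC.
have p1 : 0 <= n * t ^+ 2 * m ^+ 2 * C * (n * C - D).
  by repeat apply: mulr_ge0; rewrite ?subr_ge0.
have p2 : 0 <= n * t * D * (C * (m * C) - t * D).
  by repeat apply: mulr_ge0; rewrite ?subr_ge0.
have p3 : 0 <= n * t * C ^+ 2 * m * (D - t * m).
  by repeat apply: mulr_ge0; rewrite ?subr_ge0.
have rest : 0 <= 2 * C * t ^+ 2 * D * n * m + C ^+ 2 * D ^+ 2 + 2 * C * t * D ^+ 2
    + 2 * C * n ^+ 2 * m ^+ 2 * t ^+ 3 + t ^+ 2 * (D + n * m * t) ^+ 2.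
  by repeat (apply: addr_ge0 || apply: mulr_ge0).
(* The right-hand side minus the left-hand side is p1 + p2 + p3 + rest. *)
lra.
Qed.

Section RowEstimates.
Variables (R : realFieldType) (I : finType) (i : I) (w : I -> R) (C g : R).
Local Notation n := (#|I|%:R : R).
Local Notation m := (#|I|.-1%:R : R).
Local Notation D := (\sum_(k | k != i) w k).
Hypothesis w_bound : forall j, 0 <= w j <= C.
Hypothesis g_gt0 : 0 < g.
Hypothesis D_gt : n * g < D.

Lemma natr_card_gt0 : 0 < n.
Proof. by rewrite ltr0n; apply/card_gt0P; exists i. Qed.

Lemma natr_card_predS : n = m + 1.
Proof. by rewrite natr1 prednK //; apply/card_gt0P; exists i. Qed.

Lemma sum_offdiag_le (v : I -> R) c : (forall j, v j <= c) -> \sum_(k | k != i) v k <= m * c.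
Proof.
move=> v_le; apply: (le_trans (ler_sum _ (fun j _ => v_le j))).
by rewrite sumr_const cardC1 mulr_natl.
Qed.

Lemma rowsum_le : D <= m * C.
Proof. by apply: sum_offdiag_le => j; case/andP: (w_bound j). Qed.

Lemma rowsum_gt0 : 0 < D.
Proof. exact: lt_trans (mulr_gt0 natr_card_gt0 g_gt0) D_gt. Qed.

Lemma weight_bound_ge0 : 0 <= C.
Proof. by case/andP: (w_bound i); apply: le_trans. Qed.

Lemma natr_card_pred_gt0 : 0 < m.
Proof.
have := rowsum_le; have := rowsum_gt0; have := weight_bound_ge0.
have : 0 <= m := ler0n _ _.
nra.
Qed.

Lemma lt_weight_bound : g < C.
Proof.
rewrite ltNge; apply/negP => C_le_g.
have := ler_wpM2l (ltW natr_card_pred_gt0) C_le_g; have := D_gt; have := rowsum_le.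
by have := g_gt0; rewrite natr_card_predS; lra.
Qed.

Lemma sum_sqr_weights_le : \sum_j w j ^+ 2 <= n * C ^+ 2.
Proof.
have w2_le j : w j ^+ 2 <= C ^+ 2.
  by case/andP: (w_bound j) => w0 wC; rewrite ler_sqr ?nnegrE // (le_trans w0 wC).
by rewrite (bigD1 i) //= natr_card_predS mulrDl mul1r addrC lerD ?sum_offdiag_le.
Qed.

Lemma sum_sqr_normalized_le : \sum_j (w j / D) ^+ 2 <= C ^+ 2 / (n * g ^+ 2).
Proof.
have n0 := natr_card_gt0; have D0 := rowsum_gt0.
have ng_le : (n * g) ^+ 2 <= D ^+ 2.
  by rewrite ler_sqr ?nnegrE ?(ltW D_gt) ?(ltW D0) // mulr_ge0 ?ltW.
under eq_bigr do rewrite expr_div_n; rewrite -mulr_suml.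
rewrite ler_pdivrMr ?exprn_gt0 // mulrAC ler_pdivlMr ?mulr_gt0 ?exprn_gt0 //.
apply: le_trans (ler_wpM2r _ sum_sqr_weights_le) _; first by rewrite mulr_ge0 ?sqr_ge0 ?ltW.
rewrite (_ : n * C ^+ 2 * (n * g ^+ 2) = C ^+ 2 * (n * g) ^+ 2); last by ring.
by rewrite ler_wpM2l ?sqr_ge0.
Qed.

Variables (w' : I -> R) (e : R).
Local Notation E := (\sum_(k | k != i) w' k).
Hypothesis w'_close : forall j, `|w' j - w j| <= e.
Hypothesis e_lt_g : e < g.

Lemma perturbed_rowsum_ge : D + n * m * (g - e) <= n * E.
Proof.
have le_diff : D - E <= m * e.
  rewrite -sumrB; apply: sum_offdiag_le => j.
  by move: (w'_close j); rewrite distrC ler_norml => /andP[].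
by have := D_gt; have := natr_card_pred_gt0; rewrite natr_card_predS; nra.
Qed.

Lemma perturbed_rowsum_gt0 : 0 < E.
Proof.
have nmt_ge0 : 0 <= n * m * (g - e).
  by rewrite !mulr_ge0 ?ler0n // subr_ge0 ltW.
have : 0 < n * E by apply: lt_le_trans perturbed_rowsum_ge; rewrite ltr_pwDl ?rowsum_gt0.
by rewrite pmulr_rgt0 // natr_card_gt0.
Qed.

Lemma cross_numerator_le :
  \sum_j ((w' j - w j) * D - w j * (E - D)) ^+ 2 <=
  e ^+ 2 * (m ^+ 2 * C * D + (D + C * m) ^+ 2).
Proof.
have D0 := rowsum_gt0; have C0 := weight_bound_ge0.
have e_ge0 : 0 <= e by apply: le_trans (w'_close i).
have Dl_le : `|E - D| <= m * e.
  by rewrite -sumrB; apply: le_trans (ler_norm_sum _ _ _) (sum_offdiag_le w'_close).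
have diag : ((w' i - w i) * D - w i * (E - D)) ^+ 2 <= e ^+ 2 * (D + C * m) ^+ 2.
  have : `|(w' i - w i) * D - w i * (E - D)| <= e * D + C * (m * e).
    apply: le_trans (ler_normB _ _) _; rewrite !normrM (gtr0_norm D0).
    case/andP: (w_bound i) => w0 wC; rewrite (ger0_norm w0).
    by rewrite lerD ?ler_wpM2r ?(ltW D0) // ler_pM ?normr_ge0.
  rewrite -[_ ^+ 2]real_normK ?num_real //.
  rewrite (_ : e ^+ 2 * _ = (e * D + C * (m * e)) ^+ 2); last by ring.
  by rewrite ler_sqr ?nnegrE ?normr_ge0 ?addr_ge0 ?mulr_ge0 ?(ltW D0) ?ler0n.
have offdiag : \sum_(j | j != i) ((w' j - w j) * D - w j * (E - D)) ^+ 2 <=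
    e ^+ 2 * (m ^+ 2 * C * D).
  rewrite -sumrB; apply: le_trans (sum_sqr_mul_sumB_le _ w (fun j => w' j - w j)) _.
  have sum_w2 : \sum_(j | j != i) w j ^+ 2 <= C * D.
    rewrite mulr_sumr; apply: ler_sum => j _; case/andP: (w_bound j) => w0 wC.
    by rewrite expr2 ler_wpM2r.
  have sum_dl2 : \sum_(j | j != i) (w' j - w j) ^+ 2 <= m * e ^+ 2.
    apply: sum_offdiag_le => j; rewrite -real_normK ?num_real //.
    by rewrite ler_sqr ?nnegrE ?normr_ge0.
  rewrite -[#|_|]/#|predC1 i| cardC1.
  rewrite (_ : e ^+ 2 * _ = m * (C * D) * (m * e ^+ 2)); last by ring.
  apply: ler_pM sum_dl2; last by apply: ler_wpM2l; rewrite ?ler0n.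
    by rewrite mulr_ge0 ?ler0n ?sumr_ge0 // => j _; apply: sqr_ge0.
  by rewrite sumr_ge0 // => j _; apply: sqr_ge0.
by rewrite (bigD1 i) //= addrC [leRHS]mulrDr; apply: lerD.
Qed.

Lemma cross_numerator_bound_le :
  (m ^+ 2 * C * D + (D + C * m) ^+ 2) * (n * g ^+ 2 * (g - e) ^+ 2) <=
  (g - e + C) ^+ 2 * (D * E) ^+ 2.
Proof.
have n0 := natr_card_gt0; have m0 := natr_card_pred_gt0; have D0 := rowsum_gt0.
have t_gt0 : 0 < g - e by rewrite subr_gt0.
have e_ge0 : 0 <= e by apply: le_trans (w'_close i).
have poly : n * (g - e) ^+ 2 * (m ^+ 2 * C * D + (D + C * m) ^+ 2) <=
    (g - e + C) ^+ 2 * (D + n * m * (g - e)) ^+ 2.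
  apply: numerator_poly_le (ltW n0) (ltW m0) (ltW t_gt0) _ rowsum_le _ _.
  - by have := lt_weight_bound; lra.
  - by have := rowsum_le; have := weight_bound_ge0; rewrite natr_card_predS; lra.
  - by have := D_gt; rewrite natr_card_predS; nra.
have K0 : 0 <= D + n * m * (g - e).
  exact: addr_ge0 (ltW D0) (mulr_ge0 (mulr_ge0 (ltW n0) (ltW m0)) (ltW t_gt0)).
have K_le : (D + n * m * (g - e)) ^+ 2 <= (n * E) ^+ 2.
  by rewrite !expr2 ler_pM ?perturbed_rowsum_ge.
have ng_le : (n * g) ^+ 2 <= D ^+ 2.
  by rewrite ler_sqr ?nnegrE ?mulr_ge0 ?ltW.
apply: (le_trans (y := g ^+ 2 * ((g - e + C) ^+ 2 * (n * E) ^+ 2))).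
  rewrite (_ : _ * (n * g ^+ 2 * _) =
      g ^+ 2 * (n * (g - e) ^+ 2 * (m ^+ 2 * C * D + (D + C * m) ^+ 2))); last by ring.
  apply: ler_wpM2l; first exact: sqr_ge0.
  by apply: le_trans poly _; apply: ler_wpM2l; first exact: sqr_ge0.
rewrite (_ : g ^+ 2 * _ = (g - e + C) ^+ 2 * E ^+ 2 * (n * g) ^+ 2); last by ring.
rewrite (_ : _ * (D * E) ^+ 2 = (g - e + C) ^+ 2 * E ^+ 2 * D ^+ 2); last by ring.
by rewrite ler_wpM2l // mulr_ge0 ?sqr_ge0.
Qed.

Lemma sum_sqr_normalized_subr_le :
  \sum_j (w' j / E - w j / D) ^+ 2 <=
  e ^+ 2 * (g - e + C) ^+ 2 / (n * g ^+ 2 * (g - e) ^+ 2).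
Proof.
have D0 := rowsum_gt0; have E0 := perturbed_rowsum_gt0; have n0 := natr_card_gt0.
have entry j : w' j / E - w j / D = ((w' j - w j) * D - w j * (E - D)) / (D * E).
  by field; rewrite !gt_eqF.
under eq_bigr do rewrite entry expr_div_n; rewrite -mulr_suml.
apply: le_trans (ler_wpM2r _ cross_numerator_le) _; first by rewrite invr_ge0 sqr_ge0.
rewrite -[leLHS]mulrA -[leRHS]mulrA ler_wpM2l ?sqr_ge0 //.
rewrite ler_pdivrMr ?exprn_gt0 ?mulr_gt0 // [leRHS]mulrAC.
rewrite ler_pdivlMr ?mulr_gt0 ?exprn_gt0 ?subr_gt0 //.
exact: cross_numerator_bound_le.
Qed.

End RowEstimates.

Section NormalizedWeights.
Variables (R : realType) (n : nat) (W : 'M[R]_n) (C g : R).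
Hypothesis W_bound : forall i j, 0 <= W i j <= C.
Hypothesis C_ge0 : 0 <= C.
Hypothesis g_gt0 : 0 < g.
Hypothesis degree_gt : forall i, n%:R * g < degree W i.

Lemma frob_normalized_le : frob (normalized W) <= C / g.
Proof.
apply: frob_le_rows => [|i]; first exact: divr_ge0 C_ge0 (ltW g_gt0).
have n_gt0 : 0 < n%:R :> R by rewrite ltr0n (leq_ltn_trans (leq0n i) (ltn_ord i)).
under eq_bigr do rewrite mxE.
apply: le_trans (sum_sqr_normalized_le (W_bound i) g_gt0 _) _.
  by rewrite card_ord; apply: degree_gt.
suff -> : (C / g) ^+ 2 / n%:R = C ^+ 2 / (#|'I_n|%:R * g ^+ 2) by [].
by rewrite card_ord; field; rewrite !gt_eqF.
Qed.

Variables (W' : 'M[R]_n) (e : R).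
Hypothesis W'_close : forall i j, `|W' i j - W i j| <= e.
Hypothesis e_ge0 : 0 <= e.
Hypothesis e_lt_g : e < g.

Lemma perturbed_degree_gt0 i : 0 < degree W' i.
Proof.
rewrite /degree; apply: (perturbed_rowsum_gt0 (i := i) (W_bound i) g_gt0 _ (W'_close i) e_lt_g).
by rewrite card_ord; apply: degree_gt.
Qed.

Lemma frob_normalized_subr_le :
  frob (normalized W' - normalized W) <= e * (g - e + C) / (g * (g - e)).
Proof.
have t_gt0 : 0 < g - e by rewrite subr_gt0.
apply: frob_le_rows => [|i].
  exact: divr_ge0 (mulr_ge0 e_ge0 (addr_ge0 (ltW t_gt0) C_ge0)) (mulr_ge0 (ltW g_gt0) (ltW t_gt0)).
have n_gt0 : 0 < n%:R :> R by rewrite ltr0n (leq_ltn_trans (leq0n i) (ltn_ord i)).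
under eq_bigr do rewrite !mxE.
apply: le_trans (sum_sqr_normalized_subr_le (W_bound i) g_gt0 _ (W'_close i) e_lt_g) _.
  by rewrite card_ord; apply: degree_gt.
suff -> : (e * (g - e + C) / (g * (g - e))) ^+ 2 / n%:R =
  e ^+ 2 * (g - e + C) ^+ 2 / (#|'I_n|%:R * g ^+ 2 * (g - e) ^+ 2) by [].
by rewrite card_ord; field; rewrite !gt_eqF.
Qed.

End NormalizedWeights.

Theorem lemma2p2 (R : realType) (n d : nat) (hn : (1 <= n)%N) (hd : (1 <= d)%N)
  (W Wt : 'M[R]_n) (G Gt : 'I_n -> 'I_n -> 'M[R]_d)
  (f : 'I_n -> R) (eps eta C gamma : R)
  (hf : forall i, 0 < f i) (heps : 0 <= eps) (heta : 0 <= eta)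
  (hWt : forall i j, `|Wt i j / f i - W i j| <= eps)
  (hGt : forall i j, frob (Gt i j - G i j) <= eta)
  (hC : 0 < C)
  (hW : forall i j, 0 <= W i j <= C)
  (hG : forall i j, frob (G i j) <= C)
  (hGt' : forall i j, frob (Gt i j) <= C)
  (hgam : forall i, gamma < n%:R^-1 * \sum_(j < n | j != i) W i j)
  (hge : eps < gamma) :
  opnorm (Lmat W G - Lmat Wt Gt)
    <= gamma^-1 * C * (eta + eps) + eps / (gamma * (gamma - eps)) * C ^+ 2.
Proof.
have gamma_gt0 : 0 < gamma by lra.
have C0 := ltW hC.
have deg_gt i : n%:R * gamma < degree W i.
  by rewrite mulrC -ltr_pdivlMr ?ltr0n // mulrC; apply: hgam.
have deg_gt0 i : 0 < degree W i.
  by apply: lt_trans (deg_gt i); rewrite mulr_gt0 ?ltr0n.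
pose Wf := \matrix_(i, j) (Wt i j / f i).
have Wf_close i j : `|Wf i j - W i j| <= eps by rewrite mxE; apply: hWt.
have degf_gt0 := perturbed_degree_gt0 hW gamma_gt0 deg_gt Wf_close hge.
have -> : Lmat Wt Gt = Lmat Wf Gt.
  have -> : Wt = \matrix_(i, j) (f i * Wf i j).
    by apply/matrixP => i j; rewrite !mxE mulrCA divff ?gt_eqF ?mulr1.
  by rewrite Lmat_scale_rows // => i; rewrite gt_eqF.
apply: le_trans (opnorm_le_frob _) _.
apply: le_trans (frob_Lmat_subr_le _ deg_gt0 _ hGt hGt' heta C0) _ => [i j|i|].
- by case/andP: (hW i j).
- by rewrite gt_eqF.
have := ler_wpM2l heta (frob_normalized_le hW C0 gamma_gt0 deg_gt).
have := ler_wpM2l C0 (frob_normalized_subr_le hW C0 gamma_gt0 deg_gt Wf_close heps hge).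
suff -> : gamma^-1 * C * (eta + eps) + eps / (gamma * (gamma - eps)) * C ^+ 2 =
  eta * (C / gamma) + C * (eps * (gamma - eps + C) / (gamma * (gamma - eps))) by lra.
by field; rewrite !gt_eqF ?subr_gt0.
Qed.
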